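(* Let $w_1,b_1,w_2,b_2$ be the four vertices, in cyclic order, of a face of $\overline G$, where $w_1,w_2$ are white and $b_1,b_2$ black, and set $w_3=w_1$. Then $$(-1)\prod_{i=1}^2\frac{\overline\partial(w_i,b_i)}{\overline\partial(b_i,w_{i+1})}>0.$$
   Context: $G=(V,E)$ is an infinite connected graph properly embedded in the hyperbolic plane (unit disk) with every face bounded and finite, with weights $\nu(e)>0$; $G^+=(V^+,E^+)$ is its dual with weights $\nu(f)>0$; $e^+$ denotes the dual of $e$. The embedding places each dual vertex inside its face, draws edges as Euclidean segments, and makes each pair $e,e^+$ perpendicular. $\overline G$ is the bipartite graph with black vertices $V\cup V^+$ and white vertices the crossing points $e\cap e^+$, a white vertex adjacent to the endpoints of $e$ and of $e^+$ (so faces of $\overline G$ are quadrilaterals). The matrix $\overline\partial$ on vertices of $\overline G$: $\overline\partial(u,v)=0$ if $u,v$ not adjacent; for adjacent white $w$ and black $b$, with $f$ the edge of $G$ or $G^+$ having $b$ as an endpoint and containing $w$, $\overline\partial(w,b)=\overline\partial(b,w)=\nu(f)\frac{b-w}{|b-w|}$ (points as complex numbers). *)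

From HB Require Import structures.
From mathcomp Require Import all_boot all_order all_algebra.
From mathcomp Require Import complex.
From mathcomp Require Import all_classical all_reals all_analysis.
From Stdlib Require Import Relations.
Import numFieldNormedType.Exports numFieldTopology.Exports.
Import Order.TTheory GRing.Theory Num.Theory.

Set Implicit Arguments.
Unset Strict Implicit.
Unset Printing Implicit Defensive.

Local Open Scope ring_scope.
Local Open Scope classical_set_scope.

(* The complex plane, with its usual topology (the regular copy of R[i]). *)
Notation Cpl R := ((complex (Real.sort R))^o).

Section Defs.
Variable R : realType.

Definition segm (a b : Cpl R) : set (Cpl R) :=
  [set z | exists t : R, 0 <= t <= 1 /\ z = a + (t%:C)%C * (b - a)].

Definition osegm (a b : Cpl R) : set (Cpl R) :=
  [set z | exists t : R, 0 < t < 1 /\ z = a + (t%:C)%C * (b - a)].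

(* The hyperbolic plane: the open unit disk. *)
Definition disk : set (Cpl R) := [set z | `|z| < 1].

Definition perp (a b : Cpl R) : Prop := complex.Re (a * conjc b) = 0.

Definition is_face (D : set (Cpl R)) (Phi : set (Cpl R)) : Prop :=
  exists z, (disk `\` D) z /\ Phi = connected_component (disk `\` D) z.

Definition bdry (Phi : set (Cpl R)) : set (Cpl R) := closure Phi `\` Phi.

(* Embedding data of G = (V,E) together with its dual G^+ = (V^+, E^+).
   Edges of G and of G^+ are both indexed by [E]: the dual edge of [e] is e^+. *)
Record embedding (V F E : eqType) := Embedding {
  vpos  : V -> Cpl R;
  fpos  : F -> Cpl R;          (* position of a vertex of G^+ (a face of G) *)
  src   : E -> V;  tgt  : E -> V;
  dsrc  : E -> F;  dtgt : E -> F;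
  cross : E -> Cpl R;          (* the crossing point e \cap e^+ *)
  nu    : E -> R;
  nud   : E -> R
}.

Variables (V F E : eqType) (G : embedding V F E).

Definition eseg (e : E) := segm (vpos G (src G e)) (vpos G (tgt G e)).
Definition dseg (e : E) := segm (fpos G (dsrc G e)) (fpos G (dtgt G e)).

Definition drawG : set (Cpl R) := \bigcup_(e in [set: E]) eseg e.
Definition drawD : set (Cpl R) := \bigcup_(e in [set: E]) dseg e.
Definition drawGbar : set (Cpl R) := drawG `|` drawD.

Definition adjG (u v : V) : Prop :=
  exists e, (src G e = u /\ tgt G e = v) \/ (src G e = v /\ tgt G e = u).

Definition locally_finite (S : E -> set (Cpl R)) : Prop :=
  forall z, disk z -> exists2 r : R, 0 < r &
    finite_set [set e | S e `&` ball z ((r%:C)%C) !=set0].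

Record admissible : Prop := Admissible {
  adm_infinite : ~ finite_set [set: V];
  adm_connected : forall u v : V, clos_refl_trans V adjG u v;
  adm_nu_pos : forall e, 0 < nu G e;
  adm_nud_pos : forall e, 0 < nud G e;
  adm_vpos_disk : forall v, disk (vpos G v);
  adm_fpos_disk : forall f, disk (fpos G f);
  adm_vpos_inj : injective (vpos G);
  adm_fpos_inj : injective (fpos G);
  adm_vf_disj : forall v f, vpos G v <> fpos G f;
  adm_noloop : forall e, src G e <> tgt G e;
  adm_dnoloop : forall e, dsrc G e <> dtgt G e;
  adm_locfin : locally_finite eseg;
  adm_dlocfin : locally_finite dseg;
  adm_G_proper : forall e e', e <> e' ->
    eseg e `&` eseg e' `<=`
      [set vpos G v | v in [set v | (v == src G e) || (v == tgt G e)]]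
      `&` [set vpos G v | v in [set v | (v == src G e') || (v == tgt G e')]];
  adm_D_proper : forall e e', e <> e' ->
    dseg e `&` dseg e' `<=`
      [set fpos G f | f in [set f | (f == dsrc G e) || (f == dtgt G e)]]
      `&` [set fpos G f | f in [set f | (f == dsrc G e') || (f == dtgt G e')]];
  adm_vpos_off : forall v e, eseg e (vpos G v) -> v = src G e \/ v = tgt G e;
  adm_fpos_off : forall f e, dseg e (fpos G f) -> f = dsrc G e \/ f = dtgt G e;
  (* e^+ meets only e, exactly at the white vertex, interior to both *)
  adm_cross_other : forall e e', e <> e' -> eseg e `&` dseg e' = set0;
  adm_cross : forall e, eseg e `&` dseg e = [set cross G e];
  adm_cross_int : forall e,
    osegm (vpos G (src G e)) (vpos G (tgt G e)) (cross G e) /\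
    osegm (fpos G (dsrc G e)) (fpos G (dtgt G e)) (cross G e);
  adm_perp : forall e, perp (vpos G (tgt G e) - vpos G (src G e))
                            (fpos G (dtgt G e) - fpos G (dsrc G e));
  (* V^+ is the set of faces of G: each dual vertex lies inside its own face,
     and every face of G contains exactly one dual vertex *)
  adm_fpos_face : forall f, ~ drawG (fpos G f);
  adm_faces_dual : forall Phi, is_face drawG Phi ->
    exists! f, Phi (fpos G f);
  adm_face_bdd : forall Phi, is_face drawG Phi ->
    compact (closure Phi) /\ closure Phi `<=` disk;
  adm_face_fin : forall Phi, is_face drawG Phi ->
    finite_set [set e | eseg e `&` bdry Phi !=set0]
}.

(* Vertices of Gbar: white vertices (indexed by E) and black ones (V + F). *)
Inductive gvert := White of E | Black of (V + F).

Definition bpos (b : V + F) : Cpl R :=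
  match b with inl v => vpos G v | inr f => fpos G f end.

Definition gpos (u : gvert) : Cpl R :=
  match u with White e => cross G e | Black b => bpos b end.

Definition wb_adj (e : E) (b : V + F) : bool :=
  match b with
  | inl v => (v == src G e) || (v == tgt G e)
  | inr f => (f == dsrc G e) || (f == dtgt G e)
  end.

Definition wb_weight (e : E) (b : V + F) : R :=
  match b with inl _ => nu G e | inr _ => nud G e end.

Definition dbar_wb (e : E) (b : V + F) : Cpl R :=
  if wb_adj e b then
    ((wb_weight e b)%:C)%C * (bpos b - cross G e) / `|bpos b - cross G e|
  else 0.

Definition dbar (u v : gvert) : Cpl R :=
  match u, v with
  | White e, Black b => dbar_wb e b
  | Black b, White e => dbar_wb e b
  | _, _ => 0
  end.

Definition gbar_face (e1 : E) (b1 : V + F) (e2 : E) (b2 : V + F) : Prop :=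
  [/\ wb_adj e1 b1, wb_adj e2 b1, wb_adj e2 b2 & wb_adj e1 b2] /\
  e1 <> e2 /\ b1 <> b2 /\
      (exists Phi, is_face drawGbar Phi /\
        bdry Phi = segm (cross G e1) (bpos b1) `|` segm (bpos b1) (cross G e2)
                   `|` segm (cross G e2) (bpos b2) `|` segm (bpos b2) (cross G e1)).

End Defs.

Arguments White {V F E} e.
Arguments Black {V F E} b.

(* At a white vertex w = e /\ e^+ the edge e and its dual e^+ are perpendicular,
   so for the black neighbours v of e and f of e^+ the quotient (v - w)/(f - w) is
   purely imaginary, with the sign of the orientation of the right angle v w f.
   Up to a positive factor the product in the statement is minus the quotient of
   two such numbers, one at w1 and one at w2, so it is positive exactly when the
   right angles at w1 and w2 have opposite orientations.  Both w1 and w2 see [v, f]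
   at a right angle, i.e. lie on the Thales circle over [v, f]; if the orientations
   agreed they would lie on the same arc, and then a half-edge [w_i, v] of G would
   cross a half-edge [w_j, f] of G^+ with i <> j, which a proper embedding forbids.
   Faces with two black vertices of G (or two of G^+) cannot occur at all: the two
   distinct edges e1, e2 would then have the same endpoints. *)

From HB Require Import structures.
From mathcomp Require Import all_boot all_order all_algebra complex.
From mathcomp Require Import all_classical all_reals all_analysis.
From mathcomp Require Import ring lra.
Import Order.TTheory GRing.Theory Num.Theory.

Set Implicit Arguments.
Unset Strict Implicit.
Unset Printing Implicit Defensive.

Local Open Scope ring_scope.
Local Open Scope complex_scope.
Local Open Scope classical_set_scope.

Lemma mem_pair_of_sub (T : eqType) (x y s t : T) : x != y ->
  (x == s) || (x == t) -> (y == s) || (y == t) ->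
  ((s == x) || (s == y)) && ((t == x) || (t == y)).
Proof.
move=> xy /orP[]/eqP ex /orP[]/eqP ey; subst; by rewrite ?eqxx ?orbT in xy *.
Qed.

(* In the basis (P, Q) of two perpendicular vectors, Z = al P + be Q sees the
   segment [P, Q] at a right angle iff al (al - 1) |P|^2 + be (be - 1) |Q|^2 = 0. *)
Section ThalesChords.
Variable R : realFieldType.
Implicit Types a b al be : R.

Lemma thales_chord a b al be : 0 < a -> 0 < b ->
    al * (al - 1) * a + be * (be - 1) * b = 0 -> be <= 0 ->
  exists mu la : R, [/\ 0 <= mu <= 1, 0 <= la <= 1,
    mu = al * (1 - la) & be * (1 - la) + la = 0].
Proof.
move=> a0 b0 circ be0.
have al01 : al * (al - 1) <= 0.
  have : 0 <= be * (be - 1) * b by rewrite mulr_ge0 ?(ltW b0) //; nra.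
  by rewrite -(pmulr_lle0 _ a0); lra.
have nbe : 1 - be != 0 by apply: lt0r_neq0; lra.
exists (al / (1 - be)), (- be / (1 - be)); split.
- by rewrite divr_ge0 ?ler_pdivrMr ?mul1r /=; nra.
- by rewrite divr_ge0 ?ler_pdivrMr ?mul1r /=; lra.
- by field.
- by field.
Qed.

Lemma thales_chords a b al be : 0 < a -> 0 < b ->
    al * (al - 1) * a + be * (be - 1) * b = 0 -> al + be <= 1 ->
  (exists mu la : R, [/\ 0 <= mu <= 1, 0 <= la <= 1,
     mu = al * (1 - la) & be * (1 - la) + la = 0]) \/
  (exists mu la : R, [/\ 0 <= mu <= 1, 0 <= la <= 1,
     mu = be * (1 - la) & al * (1 - la) + la = 0]).
Proof.
move=> a0 b0 circ sum1; have [be0|be_gt0] := lerP be 0.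
  by left; exact: thales_chord a0 b0 circ be0.
have al0 : al <= 0.
  rewrite leNgt; apply/negP => al_gt0.
  suff : al * (al - 1) * a + be * (be - 1) * b < 0 by rewrite circ ltxx.
  by rewrite -oppr_gt0 opprD addr_gt0 // oppr_gt0 pmulr_llt0 //; nra.
by right; apply: thales_chord b0 a0 _ al0; rewrite addrC.
Qed.

End ThalesChords.

Section Plane.
Variable R : realType.
Local Notation C := (Cpl R).
Local Notation Re := complex.Re.
Local Notation Im := complex.Im.
Implicit Types a b x y z P Q Z : C.

Lemma segm_endl a b : segm a b a.
Proof. by exists 0; rewrite lexx ler01 mul0r addr0. Qed.

Lemma segm_endr a b : segm a b b.
Proof. by exists 1; rewrite ler01 lexx mul1r addrC subrK. Qed.

Lemma segm_sub a b x y : segm x y a -> segm x y b -> segm a b `<=` segm x y.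
Proof.
move=> [s [/andP[s0 s1] ->]] [t [/andP[t0 t1] ->]] _ [u [/andP[u0 u1] ->]].
exists (s + u * (t - s))%R; split; first by apply/andP; split; nra.
by rewrite !rmorphD !rmorphM !rmorphB /=; ring.
Qed.

Lemma osegm_neq a b z : a != b -> osegm a b z -> z != a /\ z != b.
Proof.
move=> ab [t [/andP[t0 t1] ->]].
have scale_neq0 s : s != 0 -> s%:C * (b - a) != 0.
  by move=> s0; rewrite mulf_neq0 ?fmorph_eq0 // subr_eq0 eq_sym.
split; rewrite -subr_eq0.
  have -> : a + t%:C * (b - a) - a = t%:C * (b - a) by ring.
  by rewrite scale_neq0 // gt_eqF.
have -> : a + t%:C * (b - a) - b = (t - 1)%:C * (b - a) by rewrite rmorphB /=; ring.
by rewrite scale_neq0 // subr_eq0 lt_eqF.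
Qed.

Lemma segm_pos_end (T : eqType) (pos : T -> C) (s t x : T) :
  (x == s) || (x == t) -> segm (pos s) (pos t) (pos x).
Proof. by case/orP => /eqP ->; [exact: segm_endl | exact: segm_endr]. Qed.

Lemma segm_sub_pos (T : eqType) (pos : T -> C) (s t x y : T) :
  (x == s) || (x == t) -> (y == s) || (y == t) ->
  segm (pos x) (pos y) `<=` segm (pos s) (pos t).
Proof. by move=> xst yst; apply: segm_sub; apply: segm_pos_end. Qed.

Lemma segm_end_sub_parallel (T : eqType) (pos : T -> C) (s t x : T) z :
  segm (pos s) (pos t) z -> (x == s) || (x == t) ->
  exists c : R, pos x - z = c%:C * (pos t - pos s).
Proof.
move=> [u [_ ->]] /orP[] /eqP ->; [exists (- u) | exists (1 - u)];
  by rewrite ?rmorphN ?rmorphB /=; ring.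
Qed.

Lemma perpZ x y (c d : R) : perp x y -> perp (c%:C * x) (d%:C * y).
Proof.
rewrite /perp => xy; rewrite -[RHS](mulr0 (c * d)) -xy.
by case: x y {xy} => [x1 x2] [y1 y2] /=; ring.
Qed.

Lemma Re_mulcJ_gt0 x : x != 0 -> 0 < Re (x * x^*).
Proof.
move=> x0; have : 0 < `|x| ^+ 2 by rewrite exprn_gt0 // normr_gt0.
by rewrite sqr_normc ltcE => /andP[].
Qed.

Lemma perp_mulcJE x y : perp x y -> x * y^* = 'i * (Im (x * y^*))%:C.
Proof. by move=> xy; rewrite {1}[x * y^*]complexE xy rmorph0 add0r. Qed.

Lemma Im_mulcJ_neq0 x y : x != 0 -> y != 0 -> perp x y -> Im (x * y^*) != 0.
Proof.
move=> x0 y0 xy; have : x * y^* != 0 by rewrite mulf_neq0 ?conjc_eq0.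
by apply: contraNneq => s0; rewrite perp_mulcJE // s0 rmorph0 mulr0.
Qed.

Lemma cramer_plane P Q Z : Im (P * Q^*) != 0 ->
  Z = (Im (Z * Q^*) / Im (P * Q^*))%:C * P + (Im (P * Z^*) / Im (P * Q^*))%:C * Q.
Proof.
case: P Q Z => [p1 p2] [q1 q2] [z1 z2] /= D.
by apply/eqP; rewrite eq_complex /=; apply/andP; split; apply/eqP; field.
Qed.

Lemma mulcJ_sub_comb P Q Z (al be : R) : perp P Q -> Z = al%:C * P + be%:C * Q ->
  Re ((P - Z) * (Q - Z)^*) = al * (al - 1) * Re (P * P^*) + be * (be - 1) * Re (Q * Q^*)
  /\ Im ((P - Z) * (Q - Z)^*) = (1 - al - be) * Im (P * Q^*).
Proof.
rewrite /perp => PQ ->; split; last by case: P Q {PQ} => [p1 p2] [q1 q2] /=; ring.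
rewrite -[RHS]addr0 -(mulr0 (1 - al - be + 2 * al * be)) -PQ.
by case: P Q {PQ} => [p1 p2] [q1 q2] /=; ring.
Qed.

Lemma chord_point P Q (al be mu la : R) :
    mu = al * (1 - la) -> be * (1 - la) + la = 0 ->
  mu%:C * P = al%:C * P + be%:C * Q + la%:C * (Q - (al%:C * P + be%:C * Q)).
Proof.
move=> -> ela; transitivity ((al * (1 - la))%:C * P + (be * (1 - la) + la)%:C * Q).
  by rewrite ela mul0r addr0.
by rewrite !(rmorphD, rmorphM, rmorphB, rmorph1) /=; ring.
Qed.

Lemma right_angles_chords_meet P Q Z : P != 0 -> Q != 0 ->
    perp P Q -> perp (P - Z) (Q - Z) ->
    0 <= Im (P * Q^*) * Im ((P - Z) * (Q - Z)^*) ->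
  (exists mu la : R, [/\ 0 <= mu <= 1, 0 <= la <= 1 &
     mu%:C * P = Z + la%:C * (Q - Z)]) \/
  (exists mu la : R, [/\ 0 <= mu <= 1, 0 <= la <= 1 &
     mu%:C * Q = Z + la%:C * (P - Z)]).
Proof.
move=> P0 Q0 PQ; have s0 := Im_mulcJ_neq0 P0 Q0 PQ.
have [al [be eZ]] : exists al be : R, Z = al%:C * P + be%:C * Q.
  by do 2!eexists; exact: cramer_plane s0.
rewrite /perp; have [-> ->] := mulcJ_sub_comb PQ eZ => circ orient.
have sum1 : al + be <= 1.
  have : 0 < Im (P * Q^*) ^+ 2 by rewrite exprn_even_gt0.
  by move: orient; rewrite mulrCA -expr2; nra.
have [|] := thales_chords (Re_mulcJ_gt0 P0) (Re_mulcJ_gt0 Q0) circ sum1;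
  move=> [mu [la [mu01 la01 emu ela]]]; [left | right]; exists mu, la; split => //.
  by rewrite eZ; exact (chord_point _ _ emu ela).
by rewrite eZ [al%:C * P + _]addrC; exact (chord_point _ _ emu ela).
Qed.

Lemma segm_meet_of_right_angles (w1 w2 v f : C) : v != w1 -> f != w1 ->
    perp (v - w1) (f - w1) -> perp (v - w2) (f - w2) ->
    0 <= Im ((v - w1) * (f - w1)^*) * Im ((v - w2) * (f - w2)^*) ->
  (segm w1 v `&` segm w2 f !=set0) \/ (segm w1 f `&` segm w2 v !=set0).
Proof.
rewrite -[v == w1]subr_eq0 -[f == w1]subr_eq0 => vw1 fw1 perp1 perp2 orient.
have shift x : x - w1 - (w2 - w1) = x - w2 by rewrite opprB addrA subrK.
have := right_angles_chords_meet (Z := w2 - w1) vw1 fw1 perp1.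
rewrite !shift => /(_ perp2 orient) [] [mu [la [mu01 la01 e]]].
  left; exists (w1 + mu%:C * (v - w1)); split; first by exists mu.
  by exists la; split=> //; rewrite e addrA [w1 + _]addrC subrK.
right; exists (w1 + mu%:C * (f - w1)); split; first by exists mu.
by exists la; split=> //; rewrite e addrA [w1 + _]addrC subrK.
Qed.

Lemma perp_ratio_lt0 x1 y1 x2 y2 : y1 != 0 -> y2 != 0 ->
    perp x1 y1 -> perp x2 y2 -> Im (x1 * y1^*) * Im (x2 * y2^*) < 0 ->
  (x1 / y1) / (x2 / y2) < 0.
Proof.
move=> y1_0 y2_0 perp1 perp2 orient.
have s2_0 : Im (x2 * y2^*) != 0 by apply: contraTneq orient => ->; rewrite mulr0 ltxx.
have x2_0 : x2 != 0 by apply: contraNneq s2_0 => ->; rewrite mul0r.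
have -> : (x1 / y1) / (x2 / y2) = (x1 * y1^*) / (x2 * y2^*) * ((y2 * y2^*) / (y1 * y1^*)).
  by field; rewrite !conjc_eq0 y1_0 y2_0 x2_0.
rewrite pmulr_llt0; last by rewrite -!sqr_normc divr_gt0 // exprn_gt0 // normr_gt0.
rewrite (perp_mulcJE perp1) (perp_mulcJE perp2).
have -> : 'i * (Im (x1 * y1^*))%:C / ('i * (Im (x2 * y2^*))%:C)
        = (Im (x1 * y1^*) * Im (x2 * y2^*) / Im (x2 * y2^*) ^+ 2)%:C.
  rewrite !(rmorphM, fmorphV, rmorphXn) /=; field.
  by rewrite fmorph_eq0 s2_0 neq0Ci.
by rewrite (@ltcE R) /= eqxx pmulr_llt0 // invr_gt0 exprn_even_gt0.
Qed.

Lemma weighted_ratio_gt0 (k1 k2 k3 k4 : R) x1 x2 y1 y2 :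
    0 < k1 -> 0 < k2 -> 0 < k3 -> 0 < k4 ->
    x1 != 0 -> x2 != 0 -> y1 != 0 -> y2 != 0 -> (x1 / y1) / (x2 / y2) < 0 ->
  0 < - ((k1%:C * x1 / `|x1|) / (k2%:C * x2 / `|x2|) *
         ((k3%:C * y2 / `|y2|) / (k4%:C * y1 / `|y1|))).
Proof.
move=> k1_0 k2_0 k3_0 k4_0 x1_0 x2_0 y1_0 y2_0 ratio_lt0.
have posC (k : R) : 0 < k -> 0 < k%:C :> C by move=> k0; rewrite (@ltcE R) /= eqxx.
have : [/\ 0 < `|x1|, 0 < `|x2|, 0 < `|y1| & 0 < `|y2|] by rewrite !normr_gt0.
move: `|x1| `|x2| `|y1| `|y2| => n1 n2 n3 n4 [n1_0 n2_0 n3_0 n4_0].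
have -> : - ((k1%:C * x1 / n1) / (k2%:C * x2 / n2) * ((k3%:C * y2 / n4) / (k4%:C * y1 / n3)))
        = (k1%:C * k3%:C * n2 * n3) / (k2%:C * k4%:C * n1 * n4) * - ((x1 / y1) / (x2 / y2)).
  by field; do ![apply/andP; split]; rewrite // lt0r_neq0 ?posC.
apply: mulr_gt0; last by rewrite oppr_gt0.
by apply: divr_gt0; do ![apply: mulr_gt0 | exact: posC].
Qed.

End Plane.

Section Embedding.
Variables (R : realType) (V F E : eqType) (G : embedding R V F E).
Hypothesis HG : admissible G.

Lemma cross_eseg e : eseg G e (cross G e).
Proof. by have [] : (eseg G e `&` dseg G e) (cross G e) by rewrite (adm_cross HG). Qed.

Lemma cross_dseg e : dseg G e (cross G e).
Proof. by have [] : (eseg G e `&` dseg G e) (cross G e) by rewrite (adm_cross HG). Qed.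

Lemma eseg_dseg_disj e e' z : e <> e' -> eseg G e z -> dseg G e' z -> False.
Proof.
by move=> ee' ez dz; have : (eseg G e `&` dseg G e') z by []; rewrite (adm_cross_other HG ee').
Qed.

Lemma vpos_eseg e v : wb_adj G e (inl v) -> eseg G e (vpos G v).
Proof. exact: segm_pos_end. Qed.

Lemma fpos_dseg e f : wb_adj G e (inr f) -> dseg G e (fpos G f).
Proof. exact: segm_pos_end. Qed.

Lemma vpos_neq_cross e v : wb_adj G e (inl v) -> vpos G v != cross G e.
Proof.
have st : vpos G (src G e) != vpos G (tgt G e).
  by apply/eqP => /(adm_vpos_inj HG); exact: adm_noloop HG e.
have [ns nt] := osegm_neq st (adm_cross_int HG e).1.
by case/orP => /eqP ->; rewrite eq_sym.
Qed.

Lemma fpos_neq_cross e f : wb_adj G e (inr f) -> fpos G f != cross G e.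
Proof.
have st : fpos G (dsrc G e) != fpos G (dtgt G e).
  by apply/eqP => /(adm_fpos_inj HG); exact: adm_dnoloop HG e.
have [ns nt] := osegm_neq st (adm_cross_int HG e).2.
by case/orP => /eqP ->; rewrite eq_sym.
Qed.

Lemma perp_at_cross e v f : wb_adj G e (inl v) -> wb_adj G e (inr f) ->
  perp (vpos G v - cross G e) (fpos G f - cross G e).
Proof.
move=> ev ef; have [c ->] := segm_end_sub_parallel (cross_eseg e) ev.
by have [d ->] := segm_end_sub_parallel (cross_dseg e) ef; exact/perpZ/(adm_perp HG).
Qed.

Lemma no_primal_quad e1 e2 v1 v2 : e1 <> e2 -> v1 != v2 ->
  wb_adj G e1 (inl v1) -> wb_adj G e2 (inl v1) ->
  wb_adj G e2 (inl v2) -> wb_adj G e1 (inl v2) -> False.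
Proof.
move=> ne v12 h11 h21 h22 h12; have /andP[hs ht] := mem_pair_of_sub v12 h21 h22.
apply: (eseg_dseg_disj ne _ (cross_dseg e2)).
exact/(segm_sub_pos h11 h12)/(segm_sub_pos hs ht)/cross_eseg.
Qed.

Lemma no_dual_quad e1 e2 f1 f2 : e1 <> e2 -> f1 != f2 ->
  wb_adj G e1 (inr f1) -> wb_adj G e2 (inr f1) ->
  wb_adj G e2 (inr f2) -> wb_adj G e1 (inr f2) -> False.
Proof.
move=> ne f12 h11 h21 h22 h12; have /andP[hs ht] := mem_pair_of_sub f12 h11 h12.
apply: (eseg_dseg_disj ne (cross_eseg e1)).
exact/(segm_sub_pos h21 h22)/(segm_sub_pos hs ht)/cross_dseg.
Qed.

Lemma face_ratio_lt0 e1 e2 v f : e1 <> e2 ->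
    wb_adj G e1 (inl v) -> wb_adj G e2 (inl v) ->
    wb_adj G e1 (inr f) -> wb_adj G e2 (inr f) ->
  ((vpos G v - cross G e1) / (fpos G f - cross G e1)) /
  ((vpos G v - cross G e2) / (fpos G f - cross G e2)) < 0.
Proof.
move=> ne v1 v2 f1 f2.
apply: perp_ratio_lt0; rewrite ?subr_eq0 ?fpos_neq_cross //; try exact: perp_at_cross.
rewrite ltNge; apply/negP => orient.
have [] := segm_meet_of_right_angles (vpos_neq_cross v1) (fpos_neq_cross f1)
  (perp_at_cross v1 f1) (perp_at_cross v2 f2) orient => -[z [z1 z2]].
  apply: (eseg_dseg_disj ne (segm_sub (cross_eseg e1) (vpos_eseg v1) z1)).
  exact: (segm_sub (cross_dseg e2) (fpos_dseg f2) z2).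
apply: (eseg_dseg_disj (nesym ne) (segm_sub (cross_eseg e2) (vpos_eseg v2) z2)).
exact: (segm_sub (cross_dseg e1) (fpos_dseg f1) z1).
Qed.

End Embedding.

Lemma ratio_swap (K : fieldType) (x1 y1 x2 y2 : K) :
  (y1 / x1) / (y2 / x2) = ((x1 / y1) / (x2 / y2))^-1.
Proof. by rewrite !invf_div mulrC. Qed.

Theorem lemma2p5 (R : realType) (V F E : eqType) (G : embedding R V F E)
  (HG : admissible G) (e1 e2 : E) (b1 b2 : V + F) :
  gbar_face G e1 b1 e2 b2 ->
  0 < - ((dbar G (White e1) (Black b1) / dbar G (Black b1) (White e2)) *
         (dbar G (White e2) (Black b2) / dbar G (Black b2) (White e1))).
Proof.
move=> [[h1 h2 h3 h4] [ne [nb _]]].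
have nu_pos := adm_nu_pos HG; have nud_pos := adm_nud_pos HG.
have nz_v e v : wb_adj G e (inl v) -> vpos G v - cross G e != 0.
  by move=> ev; rewrite subr_eq0 (vpos_neq_cross HG ev).
have nz_f e f : wb_adj G e (inr f) -> fpos G f - cross G e != 0.
  by move=> ef; rewrite subr_eq0 (fpos_neq_cross HG ef).
case: b1 b2 h1 h2 h3 h4 nb => [v|f] [v'|f'] h1 h2 h3 h4 nb /=; rewrite /dbar_wb h1 h2 h3 h4 /=.
- by case: (no_primal_quad HG ne _ h1 h2 h3 h4); apply/eqP; congruence.
- apply: weighted_ratio_gt0; rewrite ?nz_v ?nz_f //.
  exact: face_ratio_lt0.
- apply: weighted_ratio_gt0; rewrite ?nz_v ?nz_f // ratio_swap invr_lt0.
  exact: face_ratio_lt0.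
- by case: (no_dual_quad HG ne _ h1 h2 h3 h4); apply/eqP; congruence.
Qed.
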